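(* Let $A\bowtie^{\theta} I$ be an amalgamated Banach algebra as in the context and let $((a_\alpha,i_\alpha))_\alpha$ be a net in $A\bowtie^{\theta} I$. Then $((a_\alpha,i_\alpha))_\alpha$ is a left approximate identity for $A\bowtie^{\theta} I$ if and only if $(a_\alpha)_\alpha$ is a left approximate identity for $A$, $(\theta(a_\alpha)+i_\alpha)_\alpha$ is a left approximate identity for the algebra $\theta(A)+I$, and $i_\alpha\theta(a)\to 0$ in norm for every $a\in A$. Moreover, the same equivalence holds with ''left approximate identity'' replaced by ''bounded left approximate identity'' throughout.
   Context: Let $A$ and $B$ be Banach algebras, $\theta:A\to B$ a continuous algebra homomorphism with $\|\theta\|\le 1$, and $I$ a closed two-sided ideal of $B$. The amalgamated Banach algebra $A\bowtie^{\theta} I$ is the Banach space $\{(a,i): a\in A,\ i\in I\}$ with norm $\|(a,i)\|=\|a\|+\|i\|$ and product $(a,i)\cdot(a',i')=(aa',\ \theta(a)i'+i\theta(a')+ii')$. Here $\theta(A)+I=\{\theta(a)+j: a\in A, j\in I\}$, a subalgebra of $B$ with the norm of $B$. A net $(e_\alpha)$ in a normed algebra $C$ is a left approximate identity if $e_\alpha c\to c$ for all $c\in C$. *)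

From HB Require Import structures.
From mathcomp Require Import all_boot all_order all_algebra.
Set Implicit Arguments. Unset Strict Implicit. Unset Printing Implicit Defensive.
Import Order.TTheory GRing.Theory Num.Theory.
Local Open Scope ring_scope.

Record directed_set (D : Type) (le : D -> D -> Prop) : Prop := {
  ds_inhabited : inhabited D;
  ds_refl : forall d, le d d;
  ds_trans : forall a b c, le a b -> le b c -> le a c;
  ds_upper : forall a b, exists c, le a c /\ le b c }.

Definition seq_cauchy (K : numFieldType) (V : zmodType) (n : V -> K)
  (u : nat -> V) : Prop :=
  forall eps : K, 0 < eps -> exists N : nat,
    forall p q : nat, (N <= p)%N -> (N <= q)%N -> n (u p - u q) < eps.

Definition seq_conv (K : numFieldType) (V : zmodType) (n : V -> K)
  (u : nat -> V) (l : V) : Prop :=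
  forall eps : K, 0 < eps -> exists N : nat,
    forall p : nat, (N <= p)%N -> n (u p - l) < eps.

Definition net_conv (K : numFieldType) (V : zmodType) (n : V -> K)
  (D : Type) (le : D -> D -> Prop) (x : D -> V) (l : V) : Prop :=
  forall eps : K, 0 < eps -> exists d0 : D,
    forall d : D, le d0 d -> n (x d - l) < eps.

Record banach_algebra (K : numFieldType) (A : lmodType K)
  (mul : A -> A -> A) (nrm : A -> K) : Prop := {
  ba_mulA : forall x y z, mul x (mul y z) = mul (mul x y) z;
  ba_mulDl : forall x y z, mul (x + y) z = mul x z + mul y z;
  ba_mulDr : forall x y z, mul x (y + z) = mul x y + mul x z;
  ba_mulZl : forall (k : K) x y, mul (k *: x) y = k *: mul x y;
  ba_mulZr : forall (k : K) x y, mul x (k *: y) = k *: mul x y;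
  ba_norm_ge0 : forall x, 0 <= nrm x;
  ba_norm_eq0 : forall x, nrm x = 0 -> x = 0;
  ba_normD : forall x y, nrm (x + y) <= nrm x + nrm y;
  ba_normZ : forall (k : K) x, nrm (k *: x) = `|k| * nrm x;
  ba_normM : forall x y, nrm (mul x y) <= nrm x * nrm y;
  ba_complete : forall u : nat -> A, seq_cauchy nrm u ->
                  exists l, seq_conv nrm u l }.

Record alg_hom (K : numFieldType) (A B : lmodType K)
  (mulA : A -> A -> A) (mulB : B -> B -> B) (theta : A -> B) : Prop := {
  ah_add : forall x y, theta (x + y) = theta x + theta y;
  ah_scale : forall (k : K) x, theta (k *: x) = k *: theta x;
  ah_mul : forall x y, theta (mulA x y) = mulB (theta x) (theta y) }.

Record closed_ideal (K : numFieldType) (B : lmodType K)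
  (mulB : B -> B -> B) (nB : B -> K) (I : B -> Prop) : Prop := {
  ci_0 : I 0;
  ci_add : forall x y, I x -> I y -> I (x + y);
  ci_scale : forall (k : K) x, I x -> I (k *: x);
  ci_mull : forall b x, I x -> I (mulB b x);
  ci_mulr : forall b x, I x -> I (mulB x b);
  ci_closed : forall (u : nat -> B) l, (forall p, I (u p)) ->
                seq_conv nB u l -> I l }.

(* Left approximate identity (e_d) for the normed algebra whose carrier is
   the set P inside V, with multiplication mul and norm n. *)
Definition left_approx_identity (K : numFieldType) (V : zmodType)
  (P : V -> Prop) (mul : V -> V -> V) (n : V -> K)
  (D : Type) (le : D -> D -> Prop) (e : D -> V) : Prop :=
  (forall d, P (e d)) /\
  (forall c, P c -> net_conv n le (fun d => mul (e d) c) c).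

Definition bounded_left_approx_identity (K : numFieldType) (V : zmodType)
  (P : V -> Prop) (mul : V -> V -> V) (n : V -> K)
  (D : Type) (le : D -> D -> Prop) (e : D -> V) : Prop :=
  left_approx_identity P mul n le e /\ exists M : K, forall d, n (e d) <= M.

(* The amalgamated algebra A ⋈^theta I, carried by pairs (a, i) in A * B
   with i in I. *)
Definition amal_carrier (A B : Type) (I : B -> Prop) (p : A * B) : Prop :=
  I p.2.

Definition amal_mul (K : numFieldType) (A B : lmodType K)
  (mulA : A -> A -> A) (mulB : B -> B -> B) (theta : A -> B)
  (p q : A * B) : A * B :=
  (mulA p.1 q.1,
   mulB (theta p.1) q.2 + mulB p.2 (theta q.1) + mulB p.2 q.2).

Definition amal_norm (K : numFieldType) (A B : lmodType K)
  (nA : A -> K) (nB : B -> K) (p : A * B) : K := nA p.1 + nB p.2.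

Definition thetaA_plus_I (K : numFieldType) (A B : lmodType K)
  (theta : A -> B) (I : B -> Prop) (b : B) : Prop :=
  exists a j, I j /\ b = theta a + j.

From HB Require Import structures.
From mathcomp Require Import all_boot all_order all_algebra.
Import Order.TTheory GRing.Theory Num.Theory.
Set Implicit Arguments. Unset Strict Implicit. Unset Printing Implicit Defensive.
Local Open Scope ring_scope.

(* Write e = (e, i) and c = (a, j).  The A-component of e c - c is e a - a
   and its B-component is ((theta e + i) j - j) + i theta a, while in B
   (theta e + i)(theta a + j) - (theta a + j) is theta of the former plus the
   latter.  As ||theta|| <= 1, the norm of e c - c dominates each of the three
   quantities of the theorem and is dominated by their sum.  For the bounds,
   ||i|| <= ||theta e + i|| + ||e|| for the same reason. *)

Definition vanishes (K : numFieldType) (D : Type) (le : D -> D -> Prop)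
  (f : D -> K) : Prop :=
  forall eps : K, 0 < eps -> exists d0 : D, forall d : D, le d0 d -> f d < eps.

Section Vanishing.
Variables (K : numFieldType) (D : Type) (le : D -> D -> Prop).

Lemma vanishes_le (f g : D -> K) :
  (forall d, f d <= g d) -> vanishes le g -> vanishes le f.
Proof.
move=> fg hg eps eps_gt0; have [d0 Hd0] := hg eps eps_gt0.
by exists d0 => d /Hd0; apply: le_lt_trans.
Qed.

Lemma vanishesD (hD : directed_set le) (f g : D -> K) :
  vanishes le f -> vanishes le g -> vanishes le (fun d => f d + g d).
Proof.
move=> hf hg eps eps_gt0.
have eps2_gt0 : 0 < eps / 2 by rewrite divr_gt0 // ltr0n.
have [d1 H1] := hf _ eps2_gt0; have [d2 H2] := hg _ eps2_gt0.
have [d0 [le_d1 le_d2]] := ds_upper hD d1 d2.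
exists d0 => d le_d0; rewrite [eps]splitr ltrD //.
  exact/H1/(ds_trans hD le_d1).
exact/H2/(ds_trans hD le_d2).
Qed.

Lemma net_conv_le (V W : zmodType) (n : V -> K) (m : W -> K)
  (x : D -> V) (l : V) (y : D -> W) (l' : W) :
  (forall d, n (x d - l) <= m (y d - l')) ->
  net_conv m le y l' -> net_conv n le x l.
Proof. exact: vanishes_le. Qed.

End Vanishing.

Section Amalgamation.
Variables (K : numFieldType) (A B : lmodType K).
Variables (mulA : A -> A -> A) (nA : A -> K) (mulB : B -> B -> B) (nB : B -> K).
Variable theta : A -> B.
Hypotheses (hA : banach_algebra mulA nA) (hB : banach_algebra mulB nB).
Hypotheses (htheta : alg_hom mulA mulB theta)
  (htheta_norm : forall a, nB (theta a) <= nA a).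

Lemma ba_normN (x : B) : nB (- x) = nB x.
Proof. by rewrite -scaleN1r (ba_normZ hB) normrN1 mul1r. Qed.

Lemma ba_mulr0 (x : B) : mulB x 0 = 0.
Proof. by rewrite -(scale0r 0) (ba_mulZr hB) !scale0r. Qed.

Lemma alg_homB (x y : A) : theta (x - y) = theta x - theta y.
Proof. by rewrite (ah_add htheta) -scaleN1r (ah_scale htheta) scaleN1r. Qed.

Lemma alg_hom0 : theta 0 = 0.
Proof. by have := alg_homB 0 0; rewrite !subrr. Qed.

Lemma amal_mul_subr_snd (e a : A) (i j : B) :
  (amal_mul mulA mulB theta (e, i) (a, j) - (a, j)).2 =
  (mulB (theta e + i) j - j) + mulB i (theta a).
Proof.
rewrite /= (ba_mulDl hB).
by rewrite (addrAC _ (mulB i (theta a))) (addrAC _ (mulB i (theta a))).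
Qed.

Lemma thetaA_plus_I_mul_subr (e a : A) (i j : B) :
  mulB (theta e + i) (theta a + j) - (theta a + j) =
  theta (mulA e a - a) + (amal_mul mulA mulB theta (e, i) (a, j) - (a, j)).2.
Proof.
have split_j : mulB (theta e + i) (theta a + j) - (theta a + j) =
    (mulB (theta e + i) (theta a) - theta a) + (mulB (theta e + i) j - j).
  by rewrite (ba_mulDr hB) opprD addrACA.
have theta_part : mulB (theta e + i) (theta a) - theta a =
    theta (mulA e a - a) + mulB i (theta a).
  by rewrite (ba_mulDl hB) alg_homB (ah_mul htheta) addrAC.
by rewrite split_j theta_part amal_mul_subr_snd -addrA (addrC (mulB i _)).
Qed.

Lemma amal_norm_ge_fst (a : A) (i : B) : nA a <= amal_norm nA nB (a, i).
Proof. by rewrite /amal_norm lerDl (ba_norm_ge0 hB). Qed.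

Lemma amal_norm_ge_thetaA_plus_I (a : A) (i : B) :
  nB (theta a + i) <= amal_norm nA nB (a, i).
Proof. by apply: le_trans (ba_normD hB _ _) _; rewrite lerD2r htheta_norm. Qed.

Lemma amal_norm_le (a : A) (i : B) :
  amal_norm nA nB (a, i) <= nA a + (nB (theta a + i) + nA a).
Proof.
rewrite /amal_norm lerD2l -{1}[i](addKr (theta a)) addrC.
by apply: le_trans (ba_normD hB _ _) _; rewrite lerD2l ba_normN htheta_norm.
Qed.

Section Nets.
Variables (I : B -> Prop) (D : Type) (le : D -> D -> Prop).
Hypotheses (hI : closed_ideal mulB nB I) (hD : directed_set le).
Variables (a_ : D -> A) (i_ : D -> B).
Hypothesis hi : forall d, I (i_ d).

Local Notation amal_lai :=
  (left_approx_identity (amal_carrier (A:=A) I) (amal_mul mulA mulB theta)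
     (amal_norm nA nB) le (fun d => (a_ d, i_ d))).
Local Notation thetaA_plus_I_lai :=
  (left_approx_identity (thetaA_plus_I theta I) mulB nB le
     (fun d => theta (a_ d) + i_ d)).
Local Notation cross_vanishes :=
  (forall a : A, net_conv nB le (fun d => mulB (i_ d) (theta a)) 0).

Lemma amal_lai_fst :
  amal_lai -> left_approx_identity (fun _ : A => True) mulA nA le a_.
Proof.
case=> _ conv; split=> // a _.
apply: net_conv_le (conv (a, 0) (ci_0 hI)) => d.
by rewrite /amal_norm /= lerDl (ba_norm_ge0 hB).
Qed.

Lemma amal_lai_cross : amal_lai -> cross_vanishes.
Proof.
case=> _ conv a; apply: net_conv_le (conv (a, 0) (ci_0 hI)) => d.
rewrite /amal_norm amal_mul_subr_snd ba_mulr0 !subr0 add0r.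
by rewrite lerDr (ba_norm_ge0 hA).
Qed.

Lemma amal_lai_thetaA_plus_I : amal_lai -> thetaA_plus_I_lai.
Proof.
case=> _ conv; split=> [d|_ [a [j [Ij ->]]]]; first by exists (a_ d), (i_ d).
apply: net_conv_le (conv (a, j) Ij) => d.
rewrite thetaA_plus_I_mul_subr.
exact: (amal_norm_ge_thetaA_plus_I (mulA (a_ d) a - a)).
Qed.

Lemma amal_lai_of_components :
  left_approx_identity (fun _ : A => True) mulA nA le a_ ->
  thetaA_plus_I_lai -> cross_vanishes -> amal_lai.
Proof.
case=> _ convA [_ convB] cross; split=> // -[a j] /= Ij.
have j_thetaA_plus_I : thetaA_plus_I theta I j.
  by exists 0, j; rewrite alg_hom0 add0r.
apply: vanishes_le (vanishesD hD (convA a Logic.I)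
  (vanishesD hD (convB j j_thetaA_plus_I) (cross a))) => d.
rewrite /amal_norm amal_mul_subr_snd lerD2l subr0.
exact: (ba_normD hB).
Qed.

Lemma amal_lai_iff :
  amal_lai <->
  [/\ left_approx_identity (fun _ : A => True) mulA nA le a_,
      thetaA_plus_I_lai & cross_vanishes].
Proof.
split=> [lai | [laiA laiB cross]]; last exact: amal_lai_of_components.
split; [exact: amal_lai_fst lai | exact: amal_lai_thetaA_plus_I lai |
        exact: amal_lai_cross lai].
Qed.

Lemma amal_blai_iff :
  bounded_left_approx_identity (amal_carrier (A:=A) I)
    (amal_mul mulA mulB theta) (amal_norm nA nB) le (fun d => (a_ d, i_ d))
  <->
  [/\ bounded_left_approx_identity (fun _ : A => True) mulA nA le a_,
      bounded_left_approx_identity (thetaA_plus_I theta I) mulB nB le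
        (fun d => theta (a_ d) + i_ d)
    & cross_vanishes].
Proof.
split=> [[/amal_lai_iff[laiA laiB cross] [M leM]] |].
  split=> //; split=> //; exists M => d; apply: le_trans (leM d).
    exact: amal_norm_ge_fst.
  exact: amal_norm_ge_thetaA_plus_I.
case=> -[laiA [M1 leM1]] [laiB [M2 leM2]] cross.
split; first exact/amal_lai_iff.
exists (M1 + (M2 + M1)) => d; apply: le_trans (amal_norm_le _ _) _.
by rewrite !lerD.
Qed.

End Nets.

End Amalgamation.

Theorem proposition2p1
  (K : numFieldType) (A B : lmodType K)
  (mulA : A -> A -> A) (nA : A -> K) (mulB : B -> B -> B) (nB : B -> K)
  (hA : banach_algebra mulA nA) (hB : banach_algebra mulB nB)
  (theta : A -> B) (htheta : alg_hom mulA mulB theta)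
  (htheta_norm : forall a, nB (theta a) <= nA a)
  (I : B -> Prop) (hI : closed_ideal mulB nB I)
  (D : Type) (le : D -> D -> Prop) (hD : directed_set le)
  (a_ : D -> A) (i_ : D -> B) (hi : forall d, I (i_ d)) :
  (left_approx_identity (amal_carrier (A:=A) I) (amal_mul mulA mulB theta)
     (amal_norm nA nB) le (fun d => (a_ d, i_ d))
   <->
   [/\ left_approx_identity (fun _ : A => True) mulA nA le a_,
       left_approx_identity (thetaA_plus_I theta I) mulB nB le
         (fun d => theta (a_ d) + i_ d)
     & forall a : A, net_conv nB le (fun d => mulB (i_ d) (theta a)) 0])
  /\
  (bounded_left_approx_identity (amal_carrier (A:=A) I)
     (amal_mul mulA mulB theta) (amal_norm nA nB) le (fun d => (a_ d, i_ d))
   <->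
   [/\ bounded_left_approx_identity (fun _ : A => True) mulA nA le a_,
       bounded_left_approx_identity (thetaA_plus_I theta I) mulB nB le
         (fun d => theta (a_ d) + i_ d)
     & forall a : A, net_conv nB le (fun d => mulB (i_ d) (theta a)) 0]).
Proof.
split; first exact: (amal_lai_iff hA hB htheta htheta_norm hI hD a_ hi).
exact: (amal_blai_iff hA hB htheta htheta_norm hI hD a_ hi).
Qed.
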